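(* In the setting described in the context, for every $i$ and every $z\in E_i$, writing $f=f_i=(f_1,f_2)$ and evaluating partial derivatives at $z$, $$\frac{|f_{1y}(z)|}{|f_{1x}(z)|}\le\alpha,\qquad \frac{|f_{2x}(z)|}{|f_{1x}(z)|}\le\alpha,\qquad \frac{|f_{2y}(z)|}{|f_{1x}(z)|}\le\frac1{K_0^2}+\alpha^2.$$
   Context: Let $Q=[0,1]^2$; fix $0<\alpha<1$, $K_0>1$. Let $E_1,E_2,\dots$ be closed curvilinear rectangles in $Q$, each bounded above and below by subintervals of $\{y=1\}$, $\{y=0\}$ and on the left and right by graphs $x=x^{(i)}(y)$ with $|dx^{(i)}/dy|\le\alpha$. Each $f_i=(f_{i1},f_{i2})$ is a $C^2$ diffeomorphism defined near $E_i$ mapping $E_i$ onto a full-width strip $S_i\subset Q$. For every $i$ and $z\in E_i$, $G=f_i$ satisfies at $z$ (with $J_G=|G_{1x}G_{2y}-G_{1y}G_{2x}|$): (H1) $|G_{2x}|+\alpha|G_{2y}|+\alpha^2|G_{1y}|\le\alpha|G_{1x}|$; (H2) $|G_{1x}|-\alpha|G_{1y}|\ge K_0$; (H3) $|G_{1y}|+\alpha|G_{2y}|+\alpha^2|G_{2x}|\le\alpha|G_{1x}|$; (H4) $|G_{1x}|-\alpha|G_{2x}|\ge J_GK_0$. *)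

From mathcomp Require Import all_boot all_order all_algebra.
From mathcomp Require Import all_classical all_reals all_analysis.
Set Implicit Arguments. Unset Strict Implicit. Unset Printing Implicit Defensive.
Import Order.TTheory GRing.Theory Num.Theory.
Import numFieldNormedType.Exports.
Local Open Scope classical_set_scope.
Local Open Scope ring_scope.

Section Defs.
Variable R : realType.

Definition Qsq : set (R * R) := [set z | 0 <= z.1 <= 1 /\ 0 <= z.2 <= 1].

Definition pdx (g : R * R -> R) (z : R * R) : R := derive1 (fun t => g (t, z.2)) z.1.
Definition pdy (g : R * R -> R) (z : R * R) : R := derive1 (fun t => g (z.1, t)) z.2.

Definition has_partials_at (g : R * R -> R) (z : R * R) : Prop :=
  derivable (fun t => g (t, z.2)) z.1 1 /\ derivable (fun t => g (z.1, t)) z.2 1.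

Definition C2_on (U : set (R * R)) (g : R * R -> R) : Prop :=
  open U /\
  (forall z, U z -> has_partials_at g z /\ has_partials_at (pdx g) z
                    /\ has_partials_at (pdy g) z) /\
  {in U, continuous g} /\ {in U, continuous (pdx g)} /\ {in U, continuous (pdy g)} /\
  {in U, continuous (pdx (pdx g))} /\ {in U, continuous (pdy (pdx g))} /\
  {in U, continuous (pdx (pdy g))} /\ {in U, continuous (pdy (pdy g))}.

Definition C2map_on (U : set (R * R)) (f : R * R -> R * R) : Prop :=
  C2_on U (fun z => (f z).1) /\ C2_on U (fun z => (f z).2).

Definition C2_diffeo_near (E : set (R * R)) (f : R * R -> R * R) : Prop :=
  exists (U V : set (R * R)) (g : R * R -> R * R),
    open U /\ open V /\ E `<=` U /\ f @` U = V /\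
    (forall z, U z -> g (f z) = z) /\ (forall w, V w -> U (g w) /\ f (g w) = w) /\
    C2map_on U f /\ C2map_on V g.

Definition curv_rect (alpha : R) (E : set (R * R)) : Prop :=
  exists xl xr : R -> R,
    (forall y, 0 <= y <= 1 ->
       [/\ 0 <= xl y, xl y < xr y, xr y <= 1,
           derivable xl y 1 /\ `|derive1 xl y| <= alpha &
           derivable xr y 1 /\ `|derive1 xr y| <= alpha]) /\
    E = [set z | 0 <= z.2 <= 1 /\ xl z.2 <= z.1 <= xr z.2].

Definition full_width_strip (S : set (R * R)) : Prop :=
  exists yb yt : R -> R,
    (forall x, 0 <= x <= 1 -> 0 <= yb x /\ yb x < yt x /\ yt x <= 1) /\
    continuous yb /\ continuous yt /\
    S = [set z | 0 <= z.1 <= 1 /\ yb z.1 <= z.2 <= yt z.1].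

Definition G1x (f : R * R -> R * R) z := pdx (fun w => (f w).1) z.
Definition G1y (f : R * R -> R * R) z := pdy (fun w => (f w).1) z.
Definition G2x (f : R * R -> R * R) z := pdx (fun w => (f w).2) z.
Definition G2y (f : R * R -> R * R) z := pdy (fun w => (f w).2) z.
Definition JG (f : R * R -> R * R) z :=
  `|G1x f z * G2y f z - G1y f z * G2x f z|.

Definition H1 (alpha : R) f z :=
  `|G2x f z| + alpha * `|G2y f z| + alpha ^+ 2 * `|G1y f z| <= alpha * `|G1x f z|.
Definition H2 (alpha K0 : R) f z := `|G1x f z| - alpha * `|G1y f z| >= K0.
Definition H3 (alpha : R) f z :=
  `|G1y f z| + alpha * `|G2y f z| + alpha ^+ 2 * `|G2x f z| <= alpha * `|G1x f z|.
Definition H4 (alpha K0 : R) f z := `|G1x f z| - alpha * `|G2x f z| >= JG f z * K0.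

End Defs.

(* H3 and H1 give |f1y|, |f2x| <= alpha |f1x| directly. For the last ratio, the
   determinant gives |f1x| |f2y| <= J + |f1y| |f2x|; H4 and H2 give J K0 <= |f1x|
   and K0 <= |f1x|, hence J <= |f1x| / K0 <= |f1x|^2 / K0^2, while
   |f1y| |f2x| <= alpha^2 |f1x|^2. *)
From mathcomp Require Import all_boot all_order all_algebra.
From mathcomp Require Import all_classical all_reals all_analysis.
From mathcomp Require Import lra.
Set Implicit Arguments.
Unset Strict Implicit.
Import Order.TTheory GRing.Theory Num.Theory.
Import numFieldNormedType.Exports.
Local Open Scope classical_set_scope.
Local Open Scope ring_scope.

Lemma det_ratio_le (R : realFieldType) (al K a b c d J : R) :
  1 < K -> K <= a -> J * K <= a -> 0 <= b -> 0 <= c ->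
  b <= al * a -> c <= al * a -> a * d - b * c <= J ->
  d / a <= K ^- 2 + al ^+ 2.
Proof.
move=> K_gt1 K_le_a JK_le_a b_ge0 c_ge0 b_le c_le det_le.
have K_gt0 : 0 < K by lra.
have a_gt0 : 0 < a by lra.
have J_le : J <= a ^+ 2 * K ^- 2.
  have a_K_ge1 : 1 <= a / K by rewrite ler_pdivlMr // mul1r.
  rewrite -exprVn -exprMn expr2.
  apply: le_trans (ler_peMr _ _) => //; last by lra.
  by rewrite ler_pdivlMr.
have bc_le : b * c <= al ^+ 2 * a ^+ 2.
  by rewrite -exprMn expr2 ler_pM.
rewrite ler_pdivrMr //; apply: (@le_trans _ _ ((K ^- 2 + al ^+ 2) * a ^+ 2 / a)).
  by rewrite ler_pdivlMr // mulrC; lra.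
by rewrite expr2 mulrA mulfK ?gt_eqF.
Qed.

Section HypothesesConsequences.
Variables (R : realType) (alpha K0 : R) (f : R * R -> R * R) (z : R * R).
Hypothesis alpha_ge0 : 0 <= alpha.

Lemma H1_G2x_le : H1 alpha f z -> `|G2x f z| <= alpha * `|G1x f z|.
Proof.
have := mulr_ge0 alpha_ge0 (normr_ge0 (G2y f z)).
have := mulr_ge0 (exprn_ge0 2 alpha_ge0) (normr_ge0 (G1y f z)).
rewrite /H1; lra.
Qed.

Lemma H2_G1x_ge : H2 alpha K0 f z -> K0 <= `|G1x f z|.
Proof. have := mulr_ge0 alpha_ge0 (normr_ge0 (G1y f z)); rewrite /H2; lra. Qed.

Lemma H3_G1y_le : H3 alpha f z -> `|G1y f z| <= alpha * `|G1x f z|.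
Proof.
have := mulr_ge0 alpha_ge0 (normr_ge0 (G2y f z)).
have := mulr_ge0 (exprn_ge0 2 alpha_ge0) (normr_ge0 (G2x f z)).
rewrite /H3; lra.
Qed.

Lemma H4_JG_le : H4 alpha K0 f z -> JG f z * K0 <= `|G1x f z|.
Proof. have := mulr_ge0 alpha_ge0 (normr_ge0 (G2x f z)); rewrite /H4; lra. Qed.

End HypothesesConsequences.

Lemma JG_ge (R : realType) (f : R * R -> R * R) (z : R * R) :
  `|G1x f z| * `|G2y f z| - `|G1y f z| * `|G2x f z| <= JG f z.
Proof. by rewrite /JG -!normrM lerB_dist. Qed.

Theorem lemma4p1 (R : realType) (alpha K0 : R)
  (E : nat -> set (R * R)) (S : nat -> set (R * R)) (f : nat -> R * R -> R * R) :
  0 < alpha < 1 -> 1 < K0 ->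
  (forall i, curv_rect alpha (E i) /\ E i `<=` Qsq (R:=R)) ->
  (forall i, C2_diffeo_near (E i) (f i)) ->
  (forall i, full_width_strip (S i) /\ S i `<=` Qsq (R:=R) /\ f i @` E i = S i) ->
  (forall i z, E i z ->
     [/\ H1 alpha (f i) z, H2 alpha K0 (f i) z, H3 alpha (f i) z & H4 alpha K0 (f i) z]) ->
  forall i z, E i z ->
    [/\ `|G1y (f i) z| / `|G1x (f i) z| <= alpha,
        `|G2x (f i) z| / `|G1x (f i) z| <= alpha &
        `|G2y (f i) z| / `|G1x (f i) z| <= K0 ^- 2 + alpha ^+ 2].
Proof.
move=> /andP[alpha_gt0 _] K0_gt1 _ _ _ hyps i z Ez.
have alpha_ge0 : 0 <= alpha by lra.
have [h1 h2 h3 h4] := hyps i z Ez.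
have G1x_ge := H2_G1x_ge alpha_ge0 h2.
have G1x_gt0 : 0 < `|G1x (f i) z| by lra.
have G1y_le := H3_G1y_le alpha_ge0 h3.
have G2x_le := H1_G2x_le alpha_ge0 h1.
split; [by rewrite ler_pdivrMr // mulrC.. |].
apply: (det_ratio_le K0_gt1 G1x_ge (H4_JG_le alpha_ge0 h4) (normr_ge0 _)
  (normr_ge0 _) G1y_le G2x_le (JG_ge (f i) z)).
Qed.
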